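(* The minimum $n$ for which there exist two distinct $n\times n\times n$ alternating sign hypermatrices $A$ and $B$ with $L(A)=L(B)$ is $4$. That is, no such pair exists for $n\le 3$, and such a pair exists for $n=4$.
   Context: An alternating sign hypermatrix (ASHM) is an $n\times n\times n$ hypermatrix $A=[a_{ijk}]$ with entries in $\{0,1,-1\}$ such that in every row line $[a_{ijk}: i=1,\dots,n]$ (fixed $j,k$), column line $[a_{ijk}: j=1,\dots,n]$ (fixed $i,k$) and vertical line $[a_{ijk}: k=1,\dots,n]$ (fixed $i,j$) the non-zero entries alternate in sign, starting and ending with $+1$. The $k$-th plane of $A$ is $P_k(A)=[a_{ijk}]_{i,j=1}^n$, and $L(A)=\sum_{k=1}^n k\,P_k(A)$ is an $n\times n$ matrix. *)

From mathcomp Require Import all_boot all_order all_algebra.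
Set Implicit Arguments. Unset Strict Implicit. Unset Printing Implicit Defensive.
Import Order.TTheory GRing.Theory Num.Theory.
Local Open Scope ring_scope.

(* An n x n x n hypermatrix with integer entries, A i j k = a_{ijk}
   (indices 0..n-1 represent 1..n). *)
Definition hypermatrix (n : nat) := {ffun 'I_n -> 'I_n -> 'I_n -> int}.

Definition alt_line (s : seq int) : bool :=
  let t := [seq x <- s | x != 0] in
  all (fun x => (x == 0) || (x == 1) || (x == -1)) s &&
  [&& odd (size t) &
      all (fun i => nth 0 t i == (-1) ^+ i) (iota 0 (size t))].

Definition is_ASHM (n : nat) (A : hypermatrix n) : bool :=
  [&& [forall j : 'I_n, forall k : 'I_n, alt_line [seq A i j k | i <- enum 'I_n]],
      [forall i : 'I_n, forall k : 'I_n, alt_line [seq A i j k | j <- enum 'I_n]] &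
      [forall i : 'I_n, forall j : 'I_n, alt_line [seq A i j k | k <- enum 'I_n]]].

Definition plane (n : nat) (A : hypermatrix n) (k : 'I_n) : 'M[int]_n :=
  \matrix_(i, j) A i j k.

(* L(A) = sum_{k=1}^n k P_k(A); the plane with 0-based index k has weight k+1. *)
Definition Lmat (n : nat) (A : hypermatrix n) : 'M[int]_n :=
  \sum_(k < n) (k.+1)%:R *: plane A k.

(* For n <= 3 the entry L(A)_ij = sum_k (k+1) a_ijk is the weight of the vertical
   line of A at (i,j), and an alternating line of length at most 3 is determined by
   its weight, except for (0,1,0) and (1,-1,1), which both have weight 2.  In an
   ASHM of order 3 an entry -1 is interior to its three lines, so it sits at the
   centre; hence only the central vertical line is ambiguous.  If that line of A is
   (1,-1,1), the central row line of the middle plane of A is (1,-1,1) too, so the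
   vertical line of A at (1,2) has a non-zero middle entry and weight 2; the
   vertical line of B at (1,2) then has weight 2 and no -1, so it is (0,1,0).  Were
   the central vertical line of B also (0,1,0), the central row line of the middle
   plane of B would begin with two 1s. *)
From mathcomp Require Import all_boot all_order all_algebra.
From Stdlib Require Import FunctionalExtensionality.
Set Implicit Arguments. Unset Strict Implicit. Unset Printing Implicit Defensive.
Import Order.TTheory GRing.Theory Num.Theory.
Local Open Scope ring_scope.

Definition weight (s : seq int) : int := \sum_(k < size s) k.+1%:R * s`_k.

Lemma size_map_enum_ord n (f : 'I_n -> int) : size [seq f k | k <- enum 'I_n] = n.
Proof. by rewrite size_map size_enum_ord. Qed.

Lemma nth_map_enum_ord n (f : 'I_n -> int) (i : 'I_n) :
  [seq f k | k <- enum 'I_n]`_i = f i.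
Proof. by rewrite (nth_map i) ?nth_ord_enum // size_enum_ord. Qed.

Section Lines.
Variables (n : nat) (A : hypermatrix n).

Definition row_line (j k : 'I_n) := [seq A i j k | i <- enum 'I_n].
Definition col_line (i k : 'I_n) := [seq A i j k | j <- enum 'I_n].
Definition vert_line (i j : 'I_n) := [seq A i j k | k <- enum 'I_n].

Lemma nth_row_line (i j k : 'I_n) : (row_line j k)`_i = A i j k.
Proof. exact: nth_map_enum_ord. Qed.

Lemma nth_vert_line (i j k : 'I_n) : (vert_line i j)`_k = A i j k.
Proof. exact: nth_map_enum_ord. Qed.

Lemma Lmat_weight i j : Lmat A i j = weight (vert_line i j).
Proof.
rewrite /Lmat summxE /weight size_map_enum_ord; apply: eq_bigr => k _.
by rewrite nth_map_enum_ord !mxE.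
Qed.

Hypothesis ashmA : is_ASHM A.

Lemma ASHM_row_line j k : alt_line (row_line j k).
Proof. by case/and3P: ashmA => /forallP/(_ j)/forallP/(_ k). Qed.

Lemma ASHM_col_line i k : alt_line (col_line i k).
Proof. by case/and3P: ashmA => _ /forallP/(_ i)/forallP/(_ k). Qed.

Lemma ASHM_vert_line i j : alt_line (vert_line i j).
Proof. by case/and3P: ashmA => _ _ /forallP/(_ i)/forallP/(_ j). Qed.

End Lines.

Lemma eq_hypermatrix n (A B : hypermatrix n) :
  (forall i j, vert_line A i j = vert_line B i j) -> A = B.
Proof.
move=> eq_AB; apply/ffunP => i; apply: functional_extensionality => j.
apply: functional_extensionality => k.
by rewrite -!(nth_map_enum_ord _ k) -/(vert_line _ _ _) eq_AB.
Qed.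

Lemma alt_line_trits s : alt_line s -> all (mem [:: 0; 1; -1]) s.
Proof. by case/andP=> /allP trit _; apply/allP => x /trit; rewrite !inE orbA. Qed.

Definition small_alt_lines : seq (seq int) :=
  [:: [:: 1]; [:: 1; 0]; [:: 0; 1];
      [:: 1; 0; 0]; [:: 0; 1; 0]; [:: 0; 0; 1]; [:: 1; -1; 1]].

Lemma small_alt_lineP s : (size s <= 3)%N -> alt_line s -> s \in small_alt_lines.
Proof.
case: s => [|x [|y [|z []]]] // _ /[dup] /alt_line_trits; rewrite /= !inE ?andbT.
- by case/or3P=> /eqP->.
- by case/andP=> /or3P[]/eqP-> /or3P[]/eqP->.
- by case/and3P=> /or3P[]/eqP-> /or3P[]/eqP-> /or3P[]/eqP->.
Qed.

Section SmallLines.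
Variable s : seq int.
Hypotheses (s_le3 : (size s <= 3)%N) (alt_s : alt_line s).

Let small_alt_line_all (P : pred (seq int)) : all P small_alt_lines -> P s.
Proof. by move/allP; apply; apply: small_alt_lineP. Qed.

Lemma small_alt_line_neg : -1 \in s -> s = [:: 1; -1; 1].
Proof.
move=> neg_s; apply/eqP; apply: (implyP _ neg_s).
by apply: (small_alt_line_all (P := fun u => (-1 \in u) ==> (u == [:: 1; -1; 1]))).
Qed.

Lemma small_alt_line_neg_mid (i : nat) : s`_i = -1 -> i = 1%N.
Proof.
case: (ltnP i (size s)) => [i_lt | i_ge]; last by rewrite nth_default.
move=> si; have /small_alt_line_neg s_eq : -1 \in s by rewrite -si mem_nth.
by move: si i_lt; rewrite s_eq; case: i => [|[|[|]]].
Qed.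

Lemma small_alt_line_sign (i : nat) :
  s`_i != 0 -> s`_i.+1 != 0 -> s`_i.+1 = - s`_i.
Proof.
case: (ltnP i (size s)) => [i_lt | i_ge] si sSi; last by rewrite nth_default in si.
have i_in : i \in iota 0 (size s) by rewrite mem_iota.
apply/eqP; apply: (implyP (implyP (allP _ i i_in) si) sSi).
by apply: (small_alt_line_all (P := fun u => all (fun i =>
  (u`_i != 0) ==> (u`_i.+1 != 0) ==> (u`_i.+1 == - u`_i)) (iota 0 (size u)))).
Qed.

Lemma alt_line3_weight : size s = 3 -> s`_1 != 0 -> weight s = 2.
Proof.
move=> /eqP s3 s1; apply/eqP; apply: (implyP (implyP _ s3) s1).
apply: (small_alt_line_all
  (P := fun u => (size u == 3) ==> (u`_1 != 0) ==> (weight u == 2))).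
by rewrite /= /weight /= !big_ord_recl !big_ord0.
Qed.

Lemma small_alt_line_inj t : size t = size s -> alt_line t ->
  weight s = weight t -> (-1 \in s) = (-1 \in t) -> s = t.
Proof.
move=> /eqP size_t alt_t /eqP w_st /eqP neg_st; apply/eqP.
have t_in : t \in small_alt_lines by rewrite small_alt_lineP ?(eqP size_t).
apply: (implyP (implyP (implyP (allP _ t t_in) size_t) w_st) neg_st).
apply: (small_alt_line_all (P := fun u => all (fun v => (size v == size u) ==>
  (weight u == weight v) ==> ((-1 \in u) == (-1 \in v)) ==> (u == v))
  small_alt_lines)).
by rewrite /= /weight /= !big_ord_recl !big_ord0.
Qed.

End SmallLines.

Definition mid3 : 'I_3 := Ordinal (isT : (1 < 3)%N).

Lemma ASHM3_neg_centre (A : hypermatrix 3) i j k : is_ASHM A ->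
  A i j k = -1 -> [/\ i = mid3, j = mid3 & k = mid3].
Proof.
move=> ashmA Aijk.
have neg_mid (f : 'I_3 -> int) l :
    alt_line [seq f l | l <- enum 'I_3] -> f l = -1 -> l = mid3.
  move=> alt_f fl; apply: val_inj; apply: (small_alt_line_neg_mid _ alt_f).
    by rewrite size_map_enum_ord.
  by rewrite nth_map_enum_ord.
split.
- exact: neg_mid (ASHM_row_line ashmA j k) Aijk.
- exact: neg_mid (ASHM_col_line ashmA i k) Aijk.
- exact: neg_mid (ASHM_vert_line ashmA i j) Aijk.
Qed.

Lemma ASHM3_neg_vert_line (A B : hypermatrix 3) i j : is_ASHM A -> is_ASHM B ->
  Lmat A = Lmat B -> -1 \in vert_line A i j -> -1 \in vert_line B i j.
Proof.
move=> ashmA ashmB eqL /mapP[k _ /esym Aijk].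
have [ei ej ek] := ASHM3_neg_centre ashmA Aijk; subst i j k.
set c := mid3 in Aijk *.
have B_mid (i j : 'I_3) : A i j c != 0 -> -1 \notin vert_line B i j -> B i j c = 1.
  move=> Ac noneg; have wB : weight (vert_line B i j) = 2.
    rewrite -Lmat_weight -eqL Lmat_weight.
    apply: (alt_line3_weight _ (ASHM_vert_line ashmA i j));
      by rewrite ?size_map_enum_ord ?(nth_vert_line A i j c).
  rewrite -(nth_vert_line B i j c).
  rewrite (small_alt_line_inj _ (ASHM_vert_line ashmB i j) (t := [:: 0; 1; 0]))
    ?size_map_enum_ord ?(negbTE noneg) // wB.
  by rewrite /weight /= !big_ord_recl big_ord0.
have A0cc : A ord0 c c = 1.
  have row_A : row_line A c c = [:: 1; -1; 1].
    apply: (small_alt_line_neg _ (ASHM_row_line ashmA c c)).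
      by rewrite size_map_enum_ord.
    by apply/mapP; exists c; rewrite ?mem_enum.
  by rewrite -(nth_row_line A ord0 c c) row_A.
have B0cc : B ord0 c c = 1.
  apply: B_mid; first by rewrite A0cc.
  by apply/mapP => -[l _ /esym/(ASHM3_neg_centre ashmB)[/(congr1 val)]].
apply/negPn/negP => noneg_Bcc.
have Bccc : B c c c = 1 by apply: B_mid; rewrite ?Aijk.
have := small_alt_line_sign _ (ASHM_row_line ashmB c c) (i := 0).
rewrite size_map_enum_ord (nth_row_line B ord0) (nth_row_line B c) B0cc Bccc.
by move=> /(_ isT isT isT).
Qed.

Lemma small_ASHM_neg_vert_line n (A B : hypermatrix n) i j : (n <= 3)%N ->
  is_ASHM A -> is_ASHM B -> Lmat A = Lmat B ->
  -1 \in vert_line A i j -> -1 \in vert_line B i j.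
Proof.
move=> n_le3 ashmA ashmB eqL negA.
have n3 : n = 3.
  rewrite -(size_map_enum_ord (A i j)).
  by rewrite -/(vert_line A i j) (small_alt_line_neg _ (ASHM_vert_line ashmA i j))
    ?size_map_enum_ord.
by subst n; apply: ASHM3_neg_vert_line ashmA ashmB eqL negA.
Qed.

Lemma small_ASHM_Lmat_inj n (A B : hypermatrix n) : (n <= 3)%N ->
  is_ASHM A -> is_ASHM B -> Lmat A = Lmat B -> A = B.
Proof.
move=> n_le3 ashmA ashmB eqL; apply: eq_hypermatrix => i j.
apply: (small_alt_line_inj _ (ASHM_vert_line ashmA i j)).
- by rewrite size_map_enum_ord.
- by rewrite !size_map_enum_ord.
- exact: ASHM_vert_line.
- by rewrite -!Lmat_weight eqL.
- by apply/idP/idP; apply: small_ASHM_neg_vert_line.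
Qed.

Definition hypermatrix_of n (d : seq (seq (seq int))) : hypermatrix n :=
  [ffun i : 'I_n => fun j k : 'I_n => nth 0 (nth [::] (nth [::] d i) j) k].

Definition A4 : hypermatrix 4 := hypermatrix_of 4
  [:: [:: [:: 0; 0; 0; 1]; [:: 0; 0; 1; 0]; [:: 0; 1; 0; 0]; [:: 1; 0; 0; 0]];
      [:: [:: 0; 0; 1; 0]; [:: 0; 1; 0; 0]; [:: 1; -1; 0; 1]; [:: 0; 1; 0; 0]];
      [:: [:: 0; 1; 0; 0]; [:: 1; -1; 0; 1]; [:: 0; 1; 0; 0]; [:: 0; 0; 1; 0]];
      [:: [:: 1; 0; 0; 0]; [:: 0; 1; 0; 0]; [:: 0; 0; 1; 0]; [:: 0; 0; 0; 1]]].

(* B4 replaces the four central vertical lines of A4 by lines of the same weight: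
   (0,1,0,0) by (1,0,-1,1) (weight 2) and (1,-1,0,1) by (0,0,1,0) (weight 3). *)
Definition B4 : hypermatrix 4 := hypermatrix_of 4
  [:: [:: [:: 0; 0; 0; 1]; [:: 0; 0; 1; 0]; [:: 0; 1; 0; 0]; [:: 1; 0; 0; 0]];
      [:: [:: 0; 0; 1; 0]; [:: 1; 0; -1; 1]; [:: 0; 0; 1; 0]; [:: 0; 1; 0; 0]];
      [:: [:: 0; 1; 0; 0]; [:: 0; 0; 1; 0]; [:: 1; 0; -1; 1]; [:: 0; 0; 1; 0]];
      [:: [:: 1; 0; 0; 0]; [:: 0; 1; 0; 0]; [:: 0; 0; 1; 0]; [:: 0; 0; 0; 1]]].

Lemma enum_ord4 :
  enum 'I_4 = [:: ord0; Ordinal (isT : (1 < 4)%N); Ordinal (isT : (2 < 4)%N); ord_max].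
Proof. by apply: (inj_map val_inj); rewrite val_enum_ord. Qed.

Lemma ASHM_A4_B4 : is_ASHM A4 /\ is_ASHM B4.
Proof.
by split; apply/and3P; split; apply/forallP => a; apply/forallP => b;
  rewrite enum_ord4 /= !ffunE;
  case: a => [[|[|[|[|?]]]] ?] //; case: b => [[|[|[|[|?]]]] ?] //; vm_compute.
Qed.

Lemma A4_neq_B4 : A4 <> B4.
Proof.
pose one : 'I_4 := Ordinal (isT : (1 < 4)%N).
by move/(congr1 (fun C : hypermatrix 4 => C one one ord0)); rewrite !ffunE.
Qed.

Lemma Lmat_A4_B4 : Lmat A4 = Lmat B4.
Proof.
apply/matrixP => i j; rewrite !Lmat_weight /vert_line enum_ord4 /= !ffunE.
by case: i => [[|[|[|[|?]]]] ?] //; case: j => [[|[|[|[|?]]]] ?] //;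
  rewrite /weight /= !big_ord_recl big_ord0.
Qed.

Theorem theorem2p9 :
  (forall n : nat, (n <= 3)%N ->
     forall A B : hypermatrix n, is_ASHM A -> is_ASHM B ->
       Lmat A = Lmat B -> A = B) /\
  (exists A B : hypermatrix 4,
     [/\ is_ASHM A, is_ASHM B, A <> B & Lmat A = Lmat B]).
Proof.
split; first by move=> n n_le3 A B; apply: small_ASHM_Lmat_inj.
have [ashmA4 ashmB4] := ASHM_A4_B4.
by exists A4, B4; split; [| | exact: A4_neq_B4 | exact: Lmat_A4_B4].
Qed.
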